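(* Let $\mathbf t:\mathcal D\to\mathcal T$ be any refinement system and $Q\sqsubset B$. Then there are natural isomorphisms of presheaves $Q^{-}\cong(Q^{+})^{\perp}$ (on $B^{-}$) and $Q^{+}\cong{}^{\perp}(Q^{-})$ (on $B^{+}$), where the duals are taken with respect to $B$.
   Context: A refinement system is a functor $\mathbf{t}:\mathcal{D}\to\mathcal{T}$; composition is diagrammatic ($c;d$ = first $c$ then $d$). Write $P\sqsubset A$ if $\mathbf t(P)=A$; a derivation of $P\Rightarrow_cQ$ ($c:A\to B$) is a morphism $\alpha:P\to Q$ of $\mathcal D$ with $\mathbf t(\alpha)=c$. Relative slice: $B^{+}$ has objects $(P,c)$ with $P\sqsubset X$, $c:X\to B$, and morphisms $(P_1,c_1)\to(P_2,c_2)$ the derivations of $P_1\Rightarrow_eP_2$ with $c_1=e;c_2$. For $Q\sqsubset B$, $Q^{+}:(B^{+})^{op}\to\mathbf{Set}$ sends $(P,c)$ to the set of derivations of $P\Rightarrow_cQ$, acting on morphisms by precomposition. Relative coslice: the category with objects $(d,R)$, $d:B\to Y$, $R\sqsubset Y$, and morphisms $(d_1,R_1)\to(d_2,R_2)$ the derivations of $R_1\Rightarrow_eR_2$ with $d_1;e=d_2$; $B^{-}$ is its opposite. $Q^{-}:(B^{-})^{op}\to\mathbf{Set}$ sends $(d,R)$ to the set of derivations of $Q\Rightarrow_dR$, acting by postcomposition. The category of judgments $\mathrm{Jdg}(\mathbf t)$ has objects triples $(P,c,R)$ with $P\sqsubset X$, $c:X\to Y$, $R\sqsubset Y$; morphisms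 $(P_1,c_1,R_1)\to(P_2,c_2,R_2)$ are pairs of derivations $\beta$ of $P_1\Rightarrow_eP_2$ and $\gamma$ of $R_2\Rightarrow_{e'}R_1$ with $c_1=e;c_2;e'$. The presheaf of derivations $\mathrm{Der}:\mathrm{Jdg}(\mathbf t)^{op}\to\mathbf{Set}$ sends $(P,c,R)$ to the set of derivations of $P\Rightarrow_cR$, and $(\beta,\gamma)$ to $\alpha\mapsto\beta;\alpha;\gamma$. The bracket functor $\langle-\mid-\rangle_B:B^{+}\times B^{-}\to\mathrm{Jdg}(\mathbf t)$ sends $((P,c),(d,R))\mapsto(P,c;d,R)$ and a pair of morphisms (given by derivations $\beta$, $\gamma$) to $(\beta,\gamma)$. Duals with respect to $B$: for a presheaf $\phi$ on $B^{+}$, $\phi^{\perp}$ is the presheaf on $B^{-}$ with $\phi^{\perp}(y)=$ the set of natural transformations $\phi\Rightarrow\mathrm{Der}(\langle-\mid y\rangle_B)$ of presheaves on $B^{+}$; for a presheaf $\psi$ on $B^{-}$, ${}^{\perp}\psi$ is the presheaf on $B^{+}$ with ${}^{\perp}\psi(x)=$ the set of natural transformations $\psi\Rightarrow\mathrm{Der}(\langle x\mid-\rangle_B)$ of presheaves on $B^{-}$ (functorial in $y$, resp. $x$, via the bracket). *)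

From Stdlib Require Import ProofIrrelevance FunctionalExtensionality.
Set Implicit Arguments.
Unset Strict Implicit.

(* ---------- categories (composition is DIAGRAMMATIC: f ;; g = first f then g) *)
Record Category := {
  Ob :> Type;
  Hom : Ob -> Ob -> Type;
  idm : forall A, Hom A A;
  comp : forall A B C, Hom A B -> Hom B C -> Hom A C;
  comp_idl : forall A B (f : Hom A B), comp (idm A) f = f;
  comp_idr : forall A B (f : Hom A B), comp f (idm B) = f;
  comp_assoc : forall A B C E (f : Hom A B) (g : Hom B C) (h : Hom C E),
      comp (comp f g) h = comp f (comp g h)
}.
Arguments Hom {_} A B.
Arguments idm {_} A.
Arguments comp {_ _ _ _} f g.
Arguments comp_idl {_ _ _} f.
Arguments comp_idr {_ _ _} f.
Arguments comp_assoc {_ _ _ _ _} f g h.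
Notation "f ;; g" := (comp f g) (at level 40, left associativity).

Record Functor (C D : Category) := {
  FO :> C -> D;
  FM : forall A B : C, Hom A B -> Hom (FO A) (FO B);
  FM_id : forall A : C, FM (idm A) = idm (FO A);
  FM_comp : forall (A B E : C) (f : Hom A B) (g : Hom B E),
      FM (f ;; g) = FM f ;; FM g
}.
Arguments FM {_ _} _ {_ _} _.
Arguments FM_id {_ _} _ _.
Arguments FM_comp {_ _} _ {_ _ _} _ _.

Record Presheaf (C : Category) := {
  PO :> C -> Type;
  PM : forall x y : C, Hom x y -> PO y -> PO x;
  PM_id : forall (x : C) (a : PO x), PM (idm x) a = a;
  PM_comp : forall (x y z : C) (f : Hom x y) (g : Hom y z) (a : PO z),
      PM (f ;; g) a = PM f (PM g a)
}.
Arguments PM {_} _ {_ _} _ _.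
Arguments PM_id {_} _ _ _.
Arguments PM_comp {_} _ {_ _ _} _ _ _.

Unset Implicit Arguments.
Record NatTrans (C : Category) (F G : Presheaf C) := {
  nt :> forall x : C, F x -> G x;
  nt_nat : forall (x y : C) (f : Hom x y) (a : F y),
      nt x (PM F f a) = PM G f (nt y a)
}.
Arguments NatTrans {C} F G.
Arguments nt {_ _ _} _ _ _.
Arguments nt_nat {_ _ _} _ {_ _} _ _.
Set Implicit Arguments.

Definition NatIso (C : Category) (F G : Presheaf C) : Prop :=
  exists (eta : NatTrans F G) (eps : NatTrans G F),
    (forall (x : C) (a : F x), eps x (eta x a) = a) /\
    (forall (x : C) (b : G x), eta x (eps x b) = b).

Lemma sig_ext (A : Type) (P : A -> Prop) (u v : sig P) :
  proj1_sig u = proj1_sig v -> u = v.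
Proof.
  destruct u as [u pu], v as [v pv]; simpl; intros ->; f_equal;
  apply proof_irrelevance.
Qed.

Lemma nt_ext (C : Category) (F G : Presheaf C) (e1 e2 : NatTrans F G) :
  (forall x a, e1 x a = e2 x a) -> e1 = e2.
Proof.
  destruct e1 as [n1 p1], e2 as [n2 p2]; simpl; intros H.
  assert (n1 = n2) as ->.
  { apply functional_extensionality_dep; intro x;
    apply functional_extensionality; intro a; apply H. }
  f_equal; apply proof_irrelevance.
Qed.

Definition opCat (C : Category) : Category :=
  {| Ob := Ob C;
     Hom := fun A B => @Hom C B A;
     idm := fun A => @idm C A;
     comp := fun A B E f g => g ;; f;
     comp_idl := fun A B f => comp_idr f;
     comp_idr := fun A B f => comp_idl f;
     comp_assoc := fun A B E F f g h => eq_sym (comp_assoc h g f) |}.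

Definition prodCat (C1 C2 : Category) : Category.
Proof.
  refine {| Ob := (Ob C1 * Ob C2)%type;
            Hom := fun x y => (Hom (fst x) (fst y) * Hom (snd x) (snd y))%type;
            idm := fun x => (idm (fst x), idm (snd x));
            comp := fun x y z f g => (fst f ;; fst g, snd f ;; snd g) |}.
  - intros x y [f1 f2]; simpl; rewrite !comp_idl; reflexivity.
  - intros x y [f1 f2]; simpl; rewrite !comp_idr; reflexivity.
  - intros x y z w [f1 f2] [g1 g2] [h1 h2]; simpl; rewrite !comp_assoc;
    reflexivity.
Defined.

Lemma prod_comp (C1 C2 : Category) (x y z : prodCat C1 C2)
  (f : Hom x y) (g : Hom y z) : f ;; g = (fst f ;; fst g, snd f ;; snd g).
Proof. reflexivity. Qed.

Definition bifun_l (C1 C2 D : Category) (G : Functor (prodCat C1 C2) D)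
  (y : C2) : Functor C1 D.
Proof.
  refine {| FO := fun x => G (x, y);
            FM := fun x1 x2 f => @FM _ _ G (x1, y) (x2, y) (f, idm y) |}.
  - intro x; exact (FM_id G (x, y)).
  - intros A B E f g; rewrite <- FM_comp; f_equal; rewrite prod_comp; simpl;
    rewrite comp_idl; reflexivity.
Defined.

Definition bifun_r (C1 C2 D : Category) (G : Functor (prodCat C1 C2) D)
  (x : C1) : Functor C2 D.
Proof.
  refine {| FO := fun y => G (x, y);
            FM := fun y1 y2 f => @FM _ _ G (x, y1) (x, y2) (idm x, f) |}.
  - intro y; exact (FM_id G (x, y)).
  - intros A B E f g; rewrite <- FM_comp; f_equal; rewrite prod_comp; simpl;
    rewrite comp_idl; reflexivity.
Defined.

Definition precomp (C D : Category) (F : Functor C D) (P : Presheaf D)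
  : Presheaf C.
Proof.
  refine {| PO := fun x => P (F x);
            PM := fun x y f a => PM P (FM F f) a |}.
  - intros x a; rewrite FM_id; apply PM_id.
  - intros x y z f g a; rewrite FM_comp; apply PM_comp.
Defined.

Section Refinement.
Variables (D T : Category) (t : Functor D T).

Ltac norm := repeat (rewrite ?FM_comp, ?FM_id, ?comp_idl, ?comp_idr, ?comp_assoc).

Lemma plus_id_ok (B : T) (x : {P : D & Hom (t P) B}) :
  projT2 x = FM t (idm (projT1 x)) ;; projT2 x.
Proof. norm; reflexivity. Qed.

Lemma plus_comp_ok (B : T) (x y z : {P : D & Hom (t P) B})
  (f : Hom (projT1 x) (projT1 y)) (g : Hom (projT1 y) (projT1 z)) :
  projT2 x = FM t f ;; projT2 y -> projT2 y = FM t g ;; projT2 z ->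
  projT2 x = FM t (f ;; g) ;; projT2 z.
Proof. intros Hf Hg; rewrite Hf, Hg; norm; reflexivity. Qed.

Lemma cos_id_ok (B : T) (x : {R : D & Hom B (t R)}) :
  projT2 x ;; FM t (idm (projT1 x)) = projT2 x.
Proof. norm; reflexivity. Qed.

Lemma cos_comp_ok (B : T) (x y z : {R : D & Hom B (t R)})
  (f : Hom (projT1 x) (projT1 y)) (g : Hom (projT1 y) (projT1 z)) :
  projT2 x ;; FM t f = projT2 y -> projT2 y ;; FM t g = projT2 z ->
  projT2 x ;; FM t (f ;; g) = projT2 z.
Proof. intros Hf Hg; rewrite <- Hg, <- Hf; norm; reflexivity. Qed.

(* relative slice B^+ : objects (P, c) with c : t P -> B; morphisms
   (P1,c1) -> (P2,c2) are derivations alpha : P1 -> P2 with c1 = t(alpha);c2 *)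
Definition Plus (B : T) : Category.
Proof.
  refine {| Ob := {P : D & Hom (t P) B};
            Hom := fun x y => {a : Hom (projT1 x) (projT1 y)
                                | projT2 x = FM t a ;; projT2 y};
            idm := fun x => exist _ (idm (projT1 x)) (plus_id_ok x);
            comp := fun x y z f g => exist _ (proj1_sig f ;; proj1_sig g)
              (plus_comp_ok (proj2_sig f) (proj2_sig g)) |}.
  - intros; apply sig_ext; simpl; apply comp_idl.
  - intros; apply sig_ext; simpl; apply comp_idr.
  - intros; apply sig_ext; simpl; apply comp_assoc.
Defined.

(* relative coslice: objects (d, R) with d : B -> t R (stored as (R, d));
   morphisms (d1,R1) -> (d2,R2) are derivations gamma : R1 -> R2 with
   d1 ; t(gamma) = d2 *)
Definition Coslice (B : T) : Category.
Proof.
  refine {| Ob := {R : D & Hom B (t R)};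
            Hom := fun x y => {g : Hom (projT1 x) (projT1 y)
                                | projT2 x ;; FM t g = projT2 y};
            idm := fun x => exist _ (idm (projT1 x)) (cos_id_ok x);
            comp := fun x y z f g => exist _ (proj1_sig f ;; proj1_sig g)
              (cos_comp_ok (proj2_sig f) (proj2_sig g)) |}.
  - intros; apply sig_ext; simpl; apply comp_idl.
  - intros; apply sig_ext; simpl; apply comp_idr.
  - intros; apply sig_ext; simpl; apply comp_assoc.
Defined.

Definition Minus (B : T) : Category := opCat (Coslice B).

Record Judgment := { jP : D; jR : D; jc : Hom (t jP) (t jR) }.

Lemma jdg_id_ok (j : Judgment) :
  jc j = FM t (idm (jP j)) ;; jc j ;; FM t (idm (jR j)).
Proof. norm; reflexivity. Qed.

Lemma jdg_comp_ok (x y z : Judgment)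
  (f : (Hom (jP x) (jP y) * Hom (jR y) (jR x))%type)
  (g : (Hom (jP y) (jP z) * Hom (jR z) (jR y))%type) :
  jc x = FM t (fst f) ;; jc y ;; FM t (snd f) ->
  jc y = FM t (fst g) ;; jc z ;; FM t (snd g) ->
  jc x = FM t (fst f ;; fst g) ;; jc z ;; FM t (snd g ;; snd f).
Proof. intros Hf Hg; rewrite Hf, Hg; norm; reflexivity. Qed.

Definition Jdg : Category.
Proof.
  refine {| Ob := Judgment;
            Hom := fun j1 j2 => {p : (Hom (jP j1) (jP j2) * Hom (jR j2) (jR j1))%type
                                 | jc j1 = FM t (fst p) ;; jc j2 ;; FM t (snd p)};
            idm := fun j : Judgment => exist _ (idm (jP j), idm (jR j)) (jdg_id_ok j);
            comp := fun x y z f g =>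
              exist _ (fst (proj1_sig f) ;; fst (proj1_sig g),
                       snd (proj1_sig g) ;; snd (proj1_sig f))
              (jdg_comp_ok (proj2_sig f) (proj2_sig g)) |}.
  - intros A B [[f1 f2] Hf]; apply sig_ext; simpl; rewrite comp_idl, comp_idr;
    reflexivity.
  - intros A B [[f1 f2] Hf]; apply sig_ext; simpl; rewrite comp_idl, comp_idr;
    reflexivity.
  - intros A B C E [[f1 f2] Hf] [[g1 g2] Hg] [[h1 h2] Hh]; apply sig_ext;
    simpl; rewrite !comp_assoc; reflexivity.
Defined.

Definition Deriv (P R : D) (c : Hom (t P) (t R)) : Type :=
  {a : Hom P R | FM t a = c}.

Lemma der_ok (j1 j2 : Jdg) (f : Hom j1 j2) (a : Deriv (jc j2)) :
  FM t (fst (proj1_sig f) ;; proj1_sig a ;; snd (proj1_sig f)) = jc j1.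
Proof.
  destruct f as [[f1 f2] Hf], a as [a Ha]; simpl in *.
  rewrite Hf, <- Ha; norm; reflexivity.
Qed.

Definition Der : Presheaf Jdg.
Proof.
  refine (@Build_Presheaf Jdg (fun j : Jdg => Deriv (jc j))
            (fun j1 j2 f a =>
              exist _ (fst (proj1_sig f) ;; proj1_sig a ;; snd (proj1_sig f))
                (der_ok f a)) _ _).
  - intros x [a Ha]; apply sig_ext; simpl; rewrite comp_idl, comp_idr;
    reflexivity.
  - intros x y z [[f1 f2] Hf] [[g1 g2] Hg] [a Ha]; apply sig_ext; simpl;
    rewrite !comp_assoc; reflexivity.
Defined.

Lemma bracket_ok (B : T) (xy1 xy2 : prodCat (Plus B) (Minus B))
  (f : Hom xy1 xy2) :
  projT2 (fst xy1) ;; projT2 (snd xy1)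
  = FM t (proj1_sig (fst f)) ;; (projT2 (fst xy2) ;; projT2 (snd xy2))
    ;; FM t (proj1_sig (snd f)).
Proof.
  destruct xy1 as [x1 y1], xy2 as [x2 y2], f as [[b Hb] [g Hg]]; simpl in *.
  rewrite Hb, <- Hg; norm; reflexivity.
Qed.

Definition bracket (B : T) : Functor (prodCat (Plus B) (Minus B)) Jdg.
Proof.
  refine (@Build_Functor (prodCat (Plus B) (Minus B)) Jdg
            (fun xy => {| jP := projT1 (fst xy); jR := projT1 (snd xy);
                          jc := projT2 (fst xy) ;; projT2 (snd xy) |})
            (fun xy1 xy2 f =>
              exist _ (proj1_sig (fst f), proj1_sig (snd f)) (bracket_ok f))
            _ _).
  - intros; apply sig_ext; reflexivity.
  - intros; apply sig_ext; reflexivity.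
Defined.

Lemma qplus_ok (Q : D) (x y : Plus (t Q)) (f : Hom x y) (a : Deriv (projT2 y)) :
  FM t (proj1_sig f ;; proj1_sig a) = projT2 x.
Proof.
  destruct f as [f Hf], a as [a Ha]; simpl in *; rewrite Hf, <- Ha; norm;
  reflexivity.
Qed.

Definition Qplus (Q : D) : Presheaf (Plus (t Q)).
Proof.
  refine (@Build_Presheaf (Plus (t Q)) (fun x : Plus (t Q) => Deriv (projT2 x))
            (fun x y f a => exist _ (proj1_sig f ;; proj1_sig a) (qplus_ok f a))
            _ _).
  - intros x [a Ha]; apply sig_ext; simpl; apply comp_idl.
  - intros x y z [f Hf] [g Hg] [a Ha]; apply sig_ext; simpl; apply comp_assoc.
Defined.

Lemma qminus_ok (Q : D) (y1 y2 : Minus (t Q)) (f : Hom y1 y2)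
  (a : Deriv (projT2 y2)) :
  FM t (proj1_sig a ;; proj1_sig f) = projT2 y1.
Proof.
  destruct f as [f Hf], a as [a Ha]; simpl in *; rewrite <- Hf, <- Ha; norm;
  reflexivity.
Qed.

Definition Qminus (Q : D) : Presheaf (Minus (t Q)).
Proof.
  refine (@Build_Presheaf (Minus (t Q)) (fun y : Minus (t Q) => Deriv (projT2 y))
            (fun y1 y2 f a => exist _ (proj1_sig a ;; proj1_sig f) (qminus_ok f a))
            _ _).
  - intros x [a Ha]; apply sig_ext; simpl; apply comp_idr.
  - intros x y z [f Hf] [g Hg] [a Ha]; apply sig_ext; simpl;
    symmetry; apply comp_assoc.
Defined.

Definition DerBr_l (B : T) (y : Minus B) : Presheaf (Plus B) :=
  precomp (bifun_l (bracket B) y) Der.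
Definition DerBr_r (B : T) (x : Plus B) : Presheaf (Minus B) :=
  precomp (bifun_r (bracket B) x) Der.

Definition perp_PM (B : T) (phi : Presheaf (Plus B)) (y1 y2 : Minus B)
  (f : Hom y1 y2) (eta : NatTrans phi (DerBr_l y2)) : NatTrans phi (DerBr_l y1).
Proof.
  refine (@Build_NatTrans (Plus B) phi (DerBr_l y1) (fun x a =>
              PM Der (@FM _ _ (bracket B) (x, y1) (x, y2) (idm x, f)) (eta x a)) _).
  intros x1 x2 g a. rewrite nt_nat. apply sig_ext; simpl.
  rewrite ?comp_idl, ?comp_idr, ?comp_assoc; reflexivity.
Defined.

Definition perp (B : T) (phi : Presheaf (Plus B)) : Presheaf (Minus B).
Proof.
  refine (@Build_Presheaf (Minus B) (fun y : Minus B => NatTrans phi (DerBr_l y))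
            (@perp_PM B phi) _ _).
  - intros y eta; apply nt_ext; intros x a; simpl.
    apply sig_ext; simpl; rewrite ?comp_idl, ?comp_idr; reflexivity.
  - intros y1 y2 y3 f g eta; apply nt_ext; intros x a; simpl.
    apply sig_ext; simpl; rewrite ?comp_idl, ?comp_idr, ?comp_assoc; reflexivity.
Defined.

Definition lperp_PM (B : T) (psi : Presheaf (Minus B)) (x1 x2 : Plus B)
  (f : Hom x1 x2) (eta : NatTrans psi (DerBr_r x2)) : NatTrans psi (DerBr_r x1).
Proof.
  refine (@Build_NatTrans (Minus B) psi (DerBr_r x1) (fun y b =>
              PM Der (@FM _ _ (bracket B) (x1, y) (x2, y) (f, idm y)) (eta y b)) _).
  intros y1 y2 g b. rewrite nt_nat. apply sig_ext; simpl.
  rewrite ?comp_idl, ?comp_idr, ?comp_assoc; reflexivity.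
Defined.

Definition lperp (B : T) (psi : Presheaf (Minus B)) : Presheaf (Plus B).
Proof.
  refine (@Build_Presheaf (Plus B) (fun x : Plus B => NatTrans psi (DerBr_r x))
            (@lperp_PM B psi) _ _).
  - intros x eta; apply nt_ext; intros y b; simpl.
    apply sig_ext; simpl; rewrite ?comp_idl, ?comp_idr; reflexivity.
  - intros x1 x2 x3 f g eta; apply nt_ext; intros y b; simpl.
    apply sig_ext; simpl; rewrite ?comp_idl, ?comp_idr, ?comp_assoc; reflexivity.
Defined.

End Refinement.

(* Q^+ is represented on B^+ by the object (Q, id) with universal element the identity derivation
   of Q, and dually Q^- on B^-. So a natural transformation out of Q^+ (resp. Q^-) is determined
   by its value at the identity derivation (Yoneda), and that value is a derivation of
   Q =>_d R (resp. P =>_c Q). Conversely every such derivation induces one by composition. *)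
Set Implicit Arguments.
Unset Strict Implicit.

Section RepresentedPresheaf.
Variables (C : Category) (F : Presheaf C) (x0 : C) (u : F x0)
  (classify : forall x : C, F x -> Hom x x0).
Hypothesis classifyK : forall (x : C) (a : F x), PM F (classify a) u = a.

Lemma nt_determined_by_universal (G : Presheaf C) (e : NatTrans F G) (x : C) (a : F x) :
  e x a = PM G (classify a) (e x0 u).
Proof. rewrite <- nt_nat, classifyK; reflexivity. Qed.

End RepresentedPresheaf.

Section Derivations.
Variables (D T : Category) (t : Functor D T).

Definition deriv_id (Q : D) : Deriv (t:=t) (idm (t Q)) := exist _ (idm Q) (FM_id t Q).

Definition deriv_comp (P Q R : D) (c : Hom (t P) (t Q)) (d : Hom (t Q) (t R))
  (b : Deriv c) (a : Deriv d) : Deriv (c ;; d).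
Proof.
  exists (proj1_sig b ;; proj1_sig a).
  rewrite FM_comp, (proj2_sig b), (proj2_sig a); reflexivity.
Defined.

Definition deriv_unitl (P R : D) (c : Hom (t P) (t R)) (a : Deriv (idm (t P) ;; c)) : Deriv c :=
  exist _ (proj1_sig a) (eq_trans (proj2_sig a) (comp_idl c)).

Definition deriv_unitr (P R : D) (c : Hom (t P) (t R)) (a : Deriv (c ;; idm (t R))) : Deriv c :=
  exist _ (proj1_sig a) (eq_trans (proj2_sig a) (comp_idr c)).

End Derivations.

Section Duality.
Variables (D T : Category) (t : Functor D T) (Q : D).

Definition Qplus_unit : Plus t (t Q) := existT _ Q (idm (t Q)).
Definition Qminus_unit : Minus t (t Q) := existT _ Q (idm (t Q)).

Definition Qplus_classify (x : Plus t (t Q)) (b : Qplus t Q x) : Hom x Qplus_unit.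
Proof.
  exists (proj1_sig b); simpl.
  rewrite comp_idr, (proj2_sig b); reflexivity.
Defined.

Definition Qminus_classify (y : Minus t (t Q)) (a : Qminus t Q y) : Hom y Qminus_unit.
Proof.
  exists (proj1_sig a); simpl.
  rewrite comp_idl, (proj2_sig a); reflexivity.
Defined.

Lemma Qplus_classifyK (x : Plus t (t Q)) (b : Qplus t Q x) :
  PM (Qplus t Q) (Qplus_classify b) (deriv_id t Q) = b.
Proof. apply sig_ext; apply comp_idr. Qed.

Lemma Qminus_classifyK (y : Minus t (t Q)) (a : Qminus t Q y) :
  PM (Qminus t Q) (Qminus_classify a) (deriv_id t Q) = a.
Proof. apply sig_ext; apply comp_idl. Qed.

Definition Qminus_to_perp_at (y : Minus t (t Q)) (a : Qminus t Q y) :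
  NatTrans (Qplus t Q) (DerBr_l y).
Proof.
  refine (@Build_NatTrans _ (Qplus t Q) (DerBr_l y) (fun x b => deriv_comp b a) _).
  intros x1 x2 f b; apply sig_ext; simpl.
  rewrite comp_idr, comp_assoc; reflexivity.
Defined.

Definition Qminus_to_perp : NatTrans (Qminus t Q) (perp (Qplus t Q)).
Proof.
  refine (@Build_NatTrans _ (Qminus t Q) (perp (Qplus t Q)) Qminus_to_perp_at _).
  intros y1 y2 f a; apply nt_ext; intros x b; apply sig_ext; simpl.
  rewrite comp_idl, comp_assoc; reflexivity.
Defined.

Definition perp_to_Qminus : NatTrans (perp (Qplus t Q)) (Qminus t Q).
Proof.
  refine (@Build_NatTrans _ (perp (Qplus t Q)) (Qminus t Q)
            (fun y e => deriv_unitl (e Qplus_unit (deriv_id t Q))) _).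
  intros y1 y2 f e; apply sig_ext; simpl.
  rewrite comp_idl; reflexivity.
Defined.

Lemma Qminus_perp_iso : NatIso (Qminus t Q) (perp (Qplus t Q)).
Proof.
  exists Qminus_to_perp, perp_to_Qminus; split.
  - intros y a; apply sig_ext; apply comp_idl.
  - intros y e; apply nt_ext; intros x b.
    rewrite (nt_determined_by_universal Qplus_classifyK e b).
    apply sig_ext; simpl.
    rewrite comp_idr; reflexivity.
Qed.

Definition Qplus_to_lperp_at (x : Plus t (t Q)) (b : Qplus t Q x) :
  NatTrans (Qminus t Q) (DerBr_r x).
Proof.
  refine (@Build_NatTrans _ (Qminus t Q) (DerBr_r x) (fun y a => deriv_comp b a) _).
  intros y1 y2 f a; apply sig_ext; simpl.
  rewrite comp_idl, comp_assoc; reflexivity.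
Defined.

Definition Qplus_to_lperp : NatTrans (Qplus t Q) (lperp (Qminus t Q)).
Proof.
  refine (@Build_NatTrans _ (Qplus t Q) (lperp (Qminus t Q)) Qplus_to_lperp_at _).
  intros x1 x2 f b; apply nt_ext; intros y a; apply sig_ext; simpl.
  rewrite comp_idr, comp_assoc; reflexivity.
Defined.

Definition lperp_to_Qplus : NatTrans (lperp (Qminus t Q)) (Qplus t Q).
Proof.
  refine (@Build_NatTrans _ (lperp (Qminus t Q)) (Qplus t Q)
            (fun x e => deriv_unitr (e Qminus_unit (deriv_id t Q))) _).
  intros x1 x2 f e; apply sig_ext; simpl.
  rewrite comp_idr; reflexivity.
Defined.

Lemma Qplus_lperp_iso : NatIso (Qplus t Q) (lperp (Qminus t Q)).
Proof.
  exists Qplus_to_lperp, lperp_to_Qplus; split.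
  - intros x b; apply sig_ext; apply comp_idr.
  - intros x e; apply nt_ext; intros y a.
    rewrite (nt_determined_by_universal Qminus_classifyK e a).
    apply sig_ext; simpl.
    rewrite comp_idl; reflexivity.
Qed.

End Duality.

Theorem theorem4p9 (D T : Category) (t : Functor D T) (Q : D) :
  NatIso (Qminus t Q) (perp (Qplus t Q)) /\
  NatIso (Qplus t Q) (lperp (Qminus t Q)).
Proof. split; [apply Qminus_perp_iso | apply Qplus_lperp_iso]. Qed.
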